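(* Let $c_0>0$, $c>0$, $q\in\mathbb Z^+$, and let $\boldsymbol\beta=(\beta_j)_{j\ge1}$ and $(\Upsilon_{\boldsymbol\nu})_{\boldsymbol\nu\in\mathscr F}$ be sequences of non-negative reals such that $\Upsilon_{\boldsymbol 0}\le c_0$ and, for all $\boldsymbol\nu\in\mathscr F\setminus\{\boldsymbol 0\}$, $$\Upsilon_{\boldsymbol\nu}\le\sum_{\substack{\boldsymbol 0\ne\boldsymbol m\le\boldsymbol\nu\\|{\rm supp}(\boldsymbol m)|\le q}}c^{|\boldsymbol m|}\binom{\boldsymbol\nu}{\boldsymbol m}\Upsilon_{\boldsymbol\nu-\boldsymbol m}\prod_{j\in{\rm supp}(\boldsymbol m)}\beta_j.$$ Then for all $\boldsymbol\nu\in\mathscr F$, $$\Upsilon_{\boldsymbol\nu}\le c_0c^{|\boldsymbol\nu|}\sum_{\boldsymbol m\le\boldsymbol\nu}\boldsymbol m!\,D_q(\boldsymbol m)\,\boldsymbol\beta^{\boldsymbol m}\prod_{i\ge1}S(\nu_i,m_i),$$ where $D_q(\boldsymbol 0):=1$ and $D_q(\boldsymbol m):=\sum_{\mathfrak u\subseteq{\rm supp}(\boldsymbol m),\,0\ne|\mathfrak u|\le q}D_q(\boldsymbol m-\boldsymbol e_{\mathfrak u})$ for $\boldsymbol m\ne\boldsymbol 0$, with $\boldsymbol e_{\mathfrak u}:=\sum_{j\in\mathfrak u}\boldsymbol e_j$. If all the hypothesized inequalities are equalities, so is the conclusion. The result also holds with $q=\infty$ (no bounds on $|{\rm supp}(\boldsymbol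 m)|$ and $|\mathfrak u|$).
   Context: $\mathscr F$ is the set of finitely supported multi-indices in $\mathbb N_0^{\mathbb N}$; ${\rm supp}(\boldsymbol\nu)=\{j:\nu_j\ne0\}$, $|\boldsymbol\nu|=\sum\nu_j$, $\boldsymbol\nu!=\prod\nu_j!$, $\boldsymbol\beta^{\boldsymbol\nu}=\prod\beta_j^{\nu_j}$, $\boldsymbol m\le\boldsymbol\nu$ componentwise, $\binom{\boldsymbol\nu}{\boldsymbol m}=\prod_j\binom{\nu_j}{m_j}$, $\boldsymbol e_j$ the $j$th unit multi-index. $S(n,m)=\frac1{m!}\sum_{j=0}^m(-1)^{m-j}\binom mj j^n$ for $n\ge m\ge0$ (Stirling numbers of the second kind, $S(0,0)=1$). *)

From HB Require Import structures.
From mathcomp Require Import all_boot all_order all_algebra.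
Set Implicit Arguments. Unset Strict Implicit. Unset Printing Implicit Defensive.
Import Order.TTheory GRing.Theory Num.Theory.
Local Open Scope ring_scope.

(* Multi-indices in N_0^N, coordinates indexed by nat (index j of the paper
   is index j-1 here).  Finite support is expressed by [supp_in n nu]:
   nu vanishes outside {0,...,n-1}. *)
Definition mi := nat -> nat.

Definition supp_in (n : nat) (nu : mi) : Prop := forall j, (n <= j)%N -> nu j = 0%N.

Definition ext_mi (n : nat) (f : 'I_n -> nat) : mi :=
  fun j => match (insub j : option 'I_n) with Some i => f i | None => 0%N end.

Definition is_zero_mi (n : nat) (m : mi) : bool := [forall i : 'I_n, m i == 0%N].

Definition abs_mi (n : nat) (m : mi) : nat := (\sum_(i < n) m i)%N.

Definition fact_mi (n : nat) (m : mi) : nat := (\prod_(i < n) (m i)`!)%N.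

Definition binom_mi (n : nat) (nu m : mi) : nat := (\prod_(i < n) 'C(nu i, m i))%N.

Definition supp_card (n : nat) (m : mi) : nat := #|[set i : 'I_n | m i != 0%N]|.

Definition sub_mi (nu m : mi) : mi := fun j => (nu j - m j)%N.

(* |u| <= q, where q = None encodes q = infinity *)
Definition qle (q : option nat) (k : nat) : bool :=
  if q is Some q' then (k <= q')%N else true.

Definition sum_le {R : nmodType} (n : nat) (nu : mi) (P : mi -> bool) (F : mi -> R) : R :=
  \sum_(m : {ffun 'I_n -> 'I_(abs_mi n nu).+1} |
          [forall i : 'I_n, (m i <= nu i)%N] && P (ext_mi (fun i => nat_of_ord (m i))))
     F (ext_mi (fun i => nat_of_ord (m i))).

Definition e_set (n : nat) (u : {set 'I_n}) : mi := ext_mi (fun i => nat_of_bool (i \in u)).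

(* D_q, computed by recursion with fuel; fuel = |m| suffices since every
   recursive step decreases |m| by at least 1. *)
Fixpoint Dfuel (q : option nat) (n : nat) (fuel : nat) (m : mi) : nat :=
  if is_zero_mi n m then 1%N else
  match fuel with
  | 0 => 0%N
  | f.+1 => (\sum_(u : {set 'I_n} | [&& u != set0, u \subset [set i : 'I_n | m i != 0%N]
                                     & qle q #|u|])
               Dfuel q n f (sub_mi m (e_set u)))%N
  end.

Definition Dq (q : option nat) (n : nat) (m : mi) : nat := Dfuel q n (abs_mi n m) m.

Definition stirling2 {R : fieldType} (k m : nat) : R :=
  (m`!%:R)^-1 * \sum_(j < m.+1) (-1) ^+ (m - j) * ('C(m, j))%:R * (j%:R) ^+ k.

Definition prod_supp {R : nzRingType} (n : nat) (beta : nat -> R) (m : mi) : R :=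
  \prod_(i < n | m i != 0%N) beta i.

Definition pow_mi {R : nzRingType} (n : nat) (beta : nat -> R) (m : mi) : R :=
  \prod_(i < n) beta i ^+ m i.

Definition rec_rhs {R : nzRingType} (q : option nat) (c : R) (beta : nat -> R)
  (Ups : mi -> R) (n : nat) (nu : mi) : R :=
  sum_le n nu (fun m => ~~ is_zero_mi n m && qle q (supp_card n m))
    (fun m => c ^+ abs_mi n m * (binom_mi n nu m)%:R * Ups (sub_mi nu m)
              * prod_supp n beta m).

Definition bound_rhs {R : fieldType} (q : option nat) (c0 c : R) (beta : nat -> R)
  (n : nat) (nu : mi) : R :=
  c0 * c ^+ abs_mi n nu *
  sum_le n nu (fun _ => true)
    (fun m => (fact_mi n m)%:R * (Dq q n m)%:R * pow_mi n beta m
              * \prod_(i < n) stirling2 (nu i) (m i)).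

From HB Require Import structures.
From mathcomp Require Import all_boot all_order all_algebra.
From mathcomp Require Import zify ring.
From Stdlib Require Import FunctionalExtensionality.
Import Order.TTheory GRing.Theory Num.Theory.
Set Implicit Arguments. Unset Strict Implicit. Unset Printing Implicit Defensive.
Local Open Scope ring_scope.

(* Let surj n k := k! S(n, k) = sum_j (-1)^(k-j) C(k, j) j^n (the number of
   surjections of an n-set onto a k-set), sm(nu, m) := prod_i surj nu_i m_i and
     A(nu) := sum_m sm(nu, m) D_q(m) beta^m,   W(nu) := c0 c^|nu| A(nu),
   so that the claimed bound is exactly W(nu).  The proof shows that W solves the
   recursion of the hypothesis with equality, W(0) = c0, and concludes by strong
   induction on |nu| (term by term, all coefficients being non-negative).

   The recursion for A rests on three facts, developed in this order:
   - surj n (k+1) = sum_(0 < r <= n) C(n, r) surj (n-r) k, so that sm(nu, m + e_u)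
     expands as a sum over the r <= nu with supp r = u ([surj_mi_add_e_set]);
   - the defining recursion of D_q ([Dq_rec]), which writes A(nu) as a sum over
     sets u of sums over the m with u inside supp m;
   - the shift m -> m + e_u in these sums ([sum_shift]); regrouping the r by
     their support then gives A(nu) = sum_r C(nu, r) beta^(supp r) A(nu - r).
   Sums over m <= nu are sums over a box {0..B}^n of finite functions, for any
   B >= max nu_i; terms with m outside [0, nu] vanish since surj n k = 0 for n < k. *)

Section SurjectionNumbers.
Variable R : comPzRingType.

Definition surj (n k : nat) : R :=
  \sum_(j < k.+1) (-1) ^+ (k - j) * ('C(k, j))%:R * (j%:R) ^+ n.

(* Pascal's rule C(k+1, j+1) = C(k, j) + C(k, j+1) merges the alternating sums
   defining surj n (k+1) and surj n k into a single sum over the shifts j + 1. *)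
Lemma surj_pascal n k :
  surj n k.+1 + surj n k =
  \sum_(j < k.+1) (-1) ^+ (k - j) * ('C(k, j))%:R * (j.+1%:R) ^+ n.
Proof.
rewrite /surj big_ord_recl /= subn0 bin0.
under eq_bigr => j _ do rewrite /= /bump /= add1n subSS binS natrD mulrDr mulrDl.
rewrite big_split /=.
set X := \sum_(i < k.+1) _ * 'C(k, i.+1)%:R * _.
have -> : \sum_(j < k.+1) (-1) ^+ (k - j) * 'C(k, j)%:R * j%:R ^+ n =
   (-1) ^+ k * 0 ^+ n - X.
  rewrite big_ord_recl /= subn0 bin0 mulr1.
  rewrite /X big_ord_recr /= bin_small // mulr0 mul0r addr0.
  congr (_ + _).
  rewrite -sumrN; apply: eq_bigr => i _.
  rewrite /bump /= add1n -[(k - i)%N]subnSK // exprS mulN1r !mulNr opprK //.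
rewrite exprS mulN1r mulNr mulr1; ring.
Qed.

(* Binomial convolution: expanding (j + 1)^n shows that the sum on the right of
   [surj_pascal] is a binomial transform of the numbers surj (n - r) k. *)
Lemma surj_binomial n k :
  \sum_(r < n.+1) ('C(n, r))%:R * surj (n - r) k =
  \sum_(j < k.+1) (-1) ^+ (k - j) * ('C(k, j))%:R * (j.+1%:R) ^+ n.
Proof.
rewrite /surj; under eq_bigr => r _ do rewrite mulr_sumr.
rewrite exchange_big /=; apply: eq_bigr => j _.
rewrite -[j.+1]addn1 natrD exprDn mulr_sumr; apply: eq_bigr => r _.
by rewrite expr1n mulr1 -mulr_natr; ring.
Qed.

(* The recursion of surjection numbers: a surjection onto k+1 points is determined
   by the non-empty set of r preimages of the last point and a surjection of the
   remaining n - r points onto k points. *)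
Lemma surj_rec n k :
  surj n k.+1 = \sum_(r < n.+1 | (0 < r)%N) ('C(n, r))%:R * surj (n - r) k.
Proof.
apply: (addIr (surj n k)); rewrite surj_pascal -surj_binomial big_mkcond /=.
rewrite [\sum_(r < n.+1) 'C(n, r)%:R * _]big_ord_recl /=.
rewrite bin0 subn0 mul1r addrC; congr (_ + _).
by rewrite [RHS]big_mkcond big_ord_recl /= add0r.
Qed.

Lemma surj_n0 n : surj n 0 = (n == 0%N)%:R.
Proof. by rewrite /surj big_ord1 /= expr0n bin0 subnn expr0 !mul1r. Qed.

Lemma surj_vanish n k : (n < k)%N -> surj n k = 0.
Proof.
elim: n {-2}n (leqnn n) k => [|N IH] n hn [|k] // hk; rewrite surj_rec big1 //.
  by move=> -[[|r] hr] //=; lia.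
by move=> -[[|r] hr] //= _; rewrite IH ?mulr0 //; lia.
Qed.

Lemma surj_0k k : surj 0 k = (k == 0%N)%:R.
Proof. by case: k => [|k]; [rewrite surj_n0 | rewrite surj_vanish]. Qed.

End SurjectionNumbers.

Lemma fact_stirling2 (F : numFieldType) n k :
  (k`!)%:R * stirling2 n k = surj F n k.
Proof.
by rewrite /stirling2 mulrA mulfV ?mul1r // pnatr_eq0 -lt0n fact_gt0.
Qed.

Section MultiIndices.
Variable n : nat.

Lemma ext_miE (f : 'I_n -> nat) (i : 'I_n) : ext_mi f i = f i.
Proof. by rewrite /ext_mi valK. Qed.

Lemma ext_mi_supp (f : 'I_n -> nat) : supp_in n (ext_mi f).
Proof. by move=> j hj; rewrite /ext_mi insubN // -leqNgt. Qed.

Lemma mi_eq (a b : mi) :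
  supp_in n a -> supp_in n b -> (forall i : 'I_n, a i = b i) -> a = b.
Proof.
move=> ha hb h; apply: functional_extensionality => j.
case: (ltnP j n) => hj; first by rewrite -[j]/(val (Ordinal hj)) h.
by rewrite ha // hb.
Qed.

Lemma sub_mi_supp (a b : mi) : supp_in n a -> supp_in n (sub_mi a b).
Proof. by move=> ha j hj; rewrite /sub_mi ha. Qed.

Lemma abs_mi_ge (m : mi) (i : 'I_n) : (m i <= abs_mi n m)%N.
Proof. by rewrite /abs_mi (bigD1 i) //= leq_addr. Qed.

Lemma abs_mi_gt0 (m : mi) : ~~ is_zero_mi n m -> (0 < abs_mi n m)%N.
Proof. by case/forallPn => i /= hi; rewrite /abs_mi (bigD1 i) //=; lia. Qed.

Lemma abs_mi_zero (m : mi) : is_zero_mi n m -> abs_mi n m = 0%N.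
Proof. by move/forallP=> h; rewrite /abs_mi big1 // => i _; apply/eqP. Qed.

Lemma abs_mi_sub (m r : mi) : (forall i : 'I_n, r i <= m i)%N ->
  abs_mi n m = (abs_mi n r + abs_mi n (sub_mi m r))%N.
Proof.
by move=> h; rewrite /abs_mi -big_split; apply: eq_bigr => i _; rewrite /sub_mi /= subnKC.
Qed.

Lemma zero_mi_eq (m : mi) : supp_in n m -> is_zero_mi n m -> m = (fun _ => 0%N).
Proof. by move=> hm /forallP hz; apply: mi_eq => // i; apply/eqP. Qed.

Lemma e_setE (u : {set 'I_n}) (i : 'I_n) : e_set u i = (i \in u) :> nat.
Proof. by rewrite /e_set ext_miE. Qed.

Lemma abs_mi_sub_e_set (m : mi) (u : {set 'I_n}) :
  u != set0 -> u \subset [set i : 'I_n | m i != 0%N] ->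
  (abs_mi n (sub_mi m (e_set u)) < abs_mi n m)%N.
Proof.
move=> /set0Pn [i0 hi0] /subsetP hs.
have hle (i : 'I_n) : (e_set u i <= m i)%N.
  by rewrite e_setE; case: (boolP (i \in u)) => // /hs; rewrite inE lt0n.
rewrite [X in (_ < X)%N](abs_mi_sub hle) -[X in (X < _)%N]add0n ltn_add2r.
by apply: leq_trans (abs_mi_ge _ i0); rewrite e_setE hi0.
Qed.

End MultiIndices.

Section Dq.
Variables (q : option nat) (n : nat).

Lemma Dfuel_enough f1 f2 (m : mi) : (abs_mi n m <= f1)%N -> (abs_mi n m <= f2)%N ->
  Dfuel q n f1 m = Dfuel q n f2 m.
Proof.
elim: f1 f2 m => [|f1 IH] [|f2] m h1 h2 /=; case hz: (is_zero_mi n m) => //;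
  have := abs_mi_gt0 (negbT hz); try lia.
move=> _; apply: eq_bigr => u /and3P [hu hs _].
by have := abs_mi_sub_e_set hu hs => hlt; apply: IH; lia.
Qed.

Lemma Dq_zero (m : mi) : is_zero_mi n m -> Dq q n m = 1%N.
Proof. by move=> hz; rewrite /Dq abs_mi_zero //= hz. Qed.

Lemma Dq_rec (m : mi) : ~~ is_zero_mi n m ->
  Dq q n m = (\sum_(u : {set 'I_n} | [&& u != set0, u \subset [set i : 'I_n | m i != 0%N]
                                     & qle q #|u|]) Dq q n (sub_mi m (e_set u)))%N.
Proof.
move=> hz; rewrite /Dq; have := abs_mi_gt0 hz.
case E: (abs_mi n m) => [|a] // _; rewrite /= (negbTE hz).
apply: eq_bigr => u /and3P [hu hs _]; apply: Dfuel_enough => //.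
by have := abs_mi_sub_e_set hu hs; lia.
Qed.

End Dq.

Definition mi_of n B (m : {ffun 'I_n -> 'I_B}) : mi := ext_mi (fun i => nat_of_ord (m i)).

Definition add_mi (a b : mi) : mi := fun j => (a j + b j)%N.

Lemma add_miE (a b : mi) j : add_mi a b j = (a j + b j)%N.
Proof. by []. Qed.

Section Boxes.
Variable n : nat.

Lemma mi_ofE B (m : {ffun 'I_n -> 'I_B}) (i : 'I_n) : mi_of m i = m i.
Proof. by rewrite /mi_of ext_miE. Qed.

Lemma mi_of_supp B (m : {ffun 'I_n -> 'I_B}) : supp_in n (mi_of m).
Proof. exact: ext_mi_supp. Qed.

Lemma box_widen (V : nmodType) (nu : mi) (P : mi -> bool) (F : mi -> V) B1 B2 :
  (forall i : 'I_n, (nu i <= B1)%N) -> (B1 <= B2)%N ->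
  \sum_(m : {ffun 'I_n -> 'I_B1.+1} | [forall i, (m i <= nu i)%N] && P (mi_of m))
     F (mi_of m) =
  \sum_(m : {ffun 'I_n -> 'I_B2.+1} | [forall i, (m i <= nu i)%N] && P (mi_of m))
     F (mi_of m).
Proof.
move=> hnu hB; have hB' : (B1.+1 <= B2.+1)%N by [].
pose widen (m : {ffun 'I_n -> 'I_B1.+1}) := [ffun i => widen_ord hB' (m i)].
pose narrow (m : {ffun 'I_n -> 'I_B2.+1}) : {ffun 'I_n -> 'I_B1.+1} :=
  [ffun i => inord (m i)].
have widenE m : mi_of (widen m) = mi_of m.
  by rewrite /mi_of; congr ext_mi; apply: functional_extensionality => i; rewrite ffunE.
symmetry; rewrite (reindex_onto widen narrow) => [|m /andP [/forallP hm _]].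
  apply: eq_big => m; last by rewrite widenE.
  rewrite widenE (_ : narrow (widen m) == m) ?andbT.
    by congr (_ && _); apply: eq_forallb => i; rewrite ffunE.
  by apply/eqP/ffunP => i; rewrite !ffunE; apply: val_inj; rewrite /= inordK.
apply/ffunP => i; rewrite !ffunE; apply: val_inj.
by rewrite /= inordK // ltnS; apply: leq_trans (hm i) (hnu i).
Qed.

Lemma sum_le_box (V : nmodType) (nu : mi) (P : mi -> bool) (F : mi -> V) B :
  (forall i : 'I_n, (nu i <= B)%N) ->
  sum_le n nu P F =
  \sum_(m : {ffun 'I_n -> 'I_B.+1} | [forall i, (m i <= nu i)%N] && P (mi_of m))
     F (mi_of m).
Proof.
move=> hB; have hA (i : 'I_n) := abs_mi_ge nu i.
by case: (leqP B (abs_mi n nu)) => hBA; [symmetry|]; apply: box_widen => //; apply: ltnW.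
Qed.

Variable B : nat.
Notation box := {ffun 'I_n -> 'I_B.+1}.

Definition box_supp (r : box) : {set 'I_n} := [set i | nat_of_ord (r i) != 0%N].

Lemma box_suppE (r : box) : [set i : 'I_n | mi_of r i != 0%N] = box_supp r.
Proof. by apply/setP => i; rewrite !inE mi_ofE. Qed.

Lemma is_zero_box (r : box) : is_zero_mi n (mi_of r) = (box_supp r == set0).
Proof.
apply/forallP/eqP => [h|h i]; first by apply/setP => i; rewrite !inE -mi_ofE (h i).
by move/setP: h => /(_ i); rewrite !inE mi_ofE => /negbFE.
Qed.

(* Adding and removing e_u inside the box (truncating at the borders). *)
Definition box_up (u : {set 'I_n}) (m : box) : box := [ffun i => inord (m i + (i \in u))].
Definition box_down (u : {set 'I_n}) (m : box) : box := [ffun i => inord (m i - (i \in u))].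

(* Shifting the summation variable by e_u: the points m with u inside supp m are
   exactly the shifts m' + e_u, provided the summand vanishes outside the box. *)
Lemma sum_shift (V : nmodType) (u : {set 'I_n}) (G : mi -> V) :
  (forall m : mi, (exists i : 'I_n, (B < m i)%N) -> G m = 0) ->
  \sum_(m : box | u \subset [set i : 'I_n | mi_of m i != 0%N]) G (mi_of m) =
  \sum_(m : box) G (add_mi (mi_of m) (e_set u)).
Proof.
move=> G_out.
rewrite (reindex_onto (box_up u) (box_down u)) => [|m /subsetP hm]; last first.
  apply/ffunP => i; rewrite !ffunE; apply: val_inj => /=.
  have hmi := ltn_ord (m i); case hiu: (i \in u) => /=; last by rewrite subn0 addn0 !inordK.
  have := hm i hiu; rewrite inE mi_ofE -lt0n => h0.
  by rewrite (@inordK B (m i - 1)) ?subnK ?inordK //; lia.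
rewrite big_mkcond; apply: eq_bigr => m _.
case: (boolP [forall i, (m i + (i \in u) <= B)%N]) => [/forallP hfit|/forallPn [i hi]].
  have upE : mi_of (box_up u m) = add_mi (mi_of m) (e_set u).
    apply: (@mi_eq n); [exact: mi_of_supp | by move=> j hj; rewrite add_miE /mi_of /e_set !ext_mi_supp |].
    by move=> i; rewrite add_miE !mi_ofE ffunE e_setE inordK // ltnS.
  have down_up : box_down u (box_up u m) = m.
    apply/ffunP => i; rewrite !ffunE; apply: val_inj => /=.
    by rewrite (@inordK B (m i + _)) ?ltnS // addnK inordK.
  have sub_up : u \subset [set i : 'I_n | mi_of (box_up u m) i != 0%N].
    by apply/subsetP => i hi; rewrite inE upE add_miE e_setE hi; lia.
  by rewrite sub_up down_up eqxx upE.
have hiu : i \in u by move: hi; case: (i \in u) => //=; rewrite addn0 -ltnS ltn_ord.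
rewrite [RHS]G_out; last by exists i; move: hi; rewrite add_miE mi_ofE e_setE hiu /=; lia.
have no_sub : u \subset [set i : 'I_n | mi_of (box_up u m) i != 0%N] = false.
  apply/negbTE/negP => /subsetP /(_ i hiu).
  by rewrite inE mi_ofE ffunE /= val_insubd ltnS; move: hi; rewrite hiu => /negbTE ->.
by rewrite no_sub.
Qed.

End Boxes.

Lemma prod_guarded (R : comPzRingType) (I : finType) (b : pred I) (x : I -> R) :
  \prod_i (if b i then x i else 0) = if [forall i, b i] then \prod_i x i else 0.
Proof.
case: ifP => [/forallP h|/negbT/forallPn [i hi]]; first by apply: eq_bigr => i _; rewrite h.
by rewrite (bigD1 i) //= (negbTE hi) mul0r.
Qed.

Section Solution.
Variables (R : comNzRingType) (q : option nat) (beta : nat -> R) (n B : nat).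
Notation box := {ffun 'I_n -> 'I_B.+1}.

Definition surj_mi (nu m : mi) : R := \prod_(i < n) surj R (nu i) (m i).

Definition solution (nu : mi) : R :=
  \sum_(m : box) surj_mi nu (mi_of m) * (Dq q n (mi_of m))%:R * pow_mi n beta (mi_of m).

Lemma surj_mi_out (nu m : mi) (i : 'I_n) : (nu i < m i)%N -> surj_mi nu m = 0.
Proof. by move=> h; rewrite /surj_mi (bigD1 i) //= surj_vanish // mul0r. Qed.

Lemma surj_mi_zero (nu m : mi) :
  ~~ is_zero_mi n nu -> is_zero_mi n m -> surj_mi nu m = 0.
Proof.
case/forallPn=> i hi /forallP hz.
by rewrite /surj_mi (bigD1 i) //= (eqP (hz i)) surj_n0 (negbTE hi) mul0r.
Qed.

(* One coordinate of the expansion below: surj nu (k + b) is a sum over the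
   values r <= nu in the box, with r > 0 exactly when b is set. *)
Lemma surj_add_bool (nu k : nat) (b : bool) : (nu <= B)%N ->
  surj R nu (k + b) =
  \sum_(r : 'I_B.+1 | ((nat_of_ord r != 0%N) == b) && (r <= nu)%N)
     ('C(nu, r))%:R * surj R (nu - r) k.
Proof.
move=> hB; case: b => /=.
  rewrite addn1 surj_rec (big_ord_widen_cond B.+1 (fun r => 0 < r)%N
    (fun r => 'C(nu, r)%:R * surj R (nu - r) k)) ?ltnS //.
  by apply: eq_bigl => r; rewrite eqb_id lt0n ltnS.
rewrite addn0 (bigD1 ord0) //= bin0 subn0 mul1r big1 ?addr0 // => r /andP [/andP [hr _] hr0].
by move: hr0 hr; rewrite -(inj_eq val_inj) eqbF_neg negbK => /negbTE ->.
Qed.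

Lemma box_guards (nu : mi) (u : {set 'I_n}) (r : box) :
  [forall i, ((nat_of_ord (r i) != 0%N) == (i \in u)) && (r i <= nu i)%N] =
  (box_supp r == u) && [forall i, (r i <= nu i)%N].
Proof.
apply/forallP/andP => [h|[/eqP <- /forallP h] i].
  split; last by apply/forallP => i; case/andP: (h i).
  by apply/eqP/setP => i; rewrite inE; case/andP: (h i) => /eqP.
by rewrite inE eqxx h.
Qed.

(* Raising the entries of m on u by one: sm(nu, m + e_u) expands as a sum over
   the r <= nu with supp r = u (the preimages of the new points). *)
Lemma surj_mi_add_e_set (nu m : mi) (u : {set 'I_n}) :
  (forall i : 'I_n, (nu i <= B)%N) ->
  surj_mi nu (add_mi m (e_set u)) =
  \sum_(r : box | (box_supp r == u) && [forall i, (r i <= nu i)%N])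
     (binom_mi n nu (mi_of r))%:R * surj_mi (sub_mi nu (mi_of r)) m.
Proof.
move=> hB; rewrite /surj_mi.
under eq_bigr => i _ do rewrite add_miE e_setE (surj_add_bool _ _ (hB i)) big_mkcond.
rewrite bigA_distr_bigA [RHS]big_mkcond; apply: eq_bigr => r _.
rewrite prod_guarded box_guards; case: ifP => // _.
rewrite big_split /= /binom_mi natr_prod.
by congr (_ * _); apply: eq_bigr => i _; rewrite ?/sub_mi mi_ofE.
Qed.

Lemma pow_mi_add_e_set (m : mi) (u : {set 'I_n}) :
  pow_mi n beta (add_mi m (e_set u)) = pow_mi n beta m * \prod_(i in u) beta i.
Proof.
rewrite /pow_mi [\prod_(i in u) _]big_mkcond /= -big_split; apply: eq_bigr => i _.
by rewrite add_miE e_setE exprD; case: (i \in u).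
Qed.

Lemma prod_supp_box (r : box) : prod_supp n beta (mi_of r) = \prod_(i in box_supp r) beta i.
Proof. by rewrite /prod_supp; apply: eq_bigl => i; rewrite inE mi_ofE. Qed.

Lemma sub_add_e_set (m : box) (u : {set 'I_n}) :
  sub_mi (add_mi (mi_of m) (e_set u)) (e_set u) = mi_of m.
Proof.
apply: functional_extensionality => j; rewrite /sub_mi add_miE; lia.
Qed.

(* Unfolding the recursion of D_q in A(nu), for nu != 0 (the term m = 0
   vanishes since sm(nu, 0) = 0). *)
Lemma solution_expand_Dq (nu : mi) : ~~ is_zero_mi n nu ->
  solution nu =
  \sum_(u : {set 'I_n} | (u != set0) && qle q #|u|)
    \sum_(m : box | u \subset [set i : 'I_n | mi_of m i != 0%N])
      surj_mi nu (mi_of m) * (Dq q n (sub_mi (mi_of m) (e_set u)))%:R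
        * pow_mi n beta (mi_of m).
Proof.
move=> hnu.
have termE (m : mi) : surj_mi nu m * (Dq q n m)%:R * pow_mi n beta m =
    \sum_(u : {set 'I_n} | [&& u != set0, u \subset [set i : 'I_n | m i != 0%N]
                                       & qle q #|u|])
      surj_mi nu m * (Dq q n (sub_mi m (e_set u)))%:R * pow_mi n beta m.
  have [hz|hz] := boolP (is_zero_mi n m); last first.
    by rewrite Dq_rec // natr_sum mulr_sumr mulr_suml.
  by rewrite surj_mi_zero // !mul0r big1 // => u _; rewrite !mul0r.
rewrite /solution (eq_bigr _ (fun m _ => termE (mi_of m))).
rewrite (exchange_big_dep (fun u : {set 'I_n} => (u != set0) && qle q #|u|)) /=.
  by apply: eq_bigr => u /andP [hu hq]; apply: eq_bigl => m; rewrite hu hq andbT.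
by move=> m u _ /and3P [-> _ ->].
Qed.

Lemma solution_shift (nu : mi) (u : {set 'I_n}) : (forall i : 'I_n, (nu i <= B)%N) ->
  \sum_(m : box | u \subset [set i : 'I_n | mi_of m i != 0%N])
     surj_mi nu (mi_of m) * (Dq q n (sub_mi (mi_of m) (e_set u)))%:R
       * pow_mi n beta (mi_of m) =
  \sum_(r : box | (box_supp r == u) && [forall i, (r i <= nu i)%N])
     (binom_mi n nu (mi_of r))%:R * prod_supp n beta (mi_of r)
       * solution (sub_mi nu (mi_of r)).
Proof.
move=> hB.
rewrite (@sum_shift n B _ u (fun m => surj_mi nu m * (Dq q n (sub_mi m (e_set u)))%:R
                                   * pow_mi n beta m)); last first.
  by move=> m [i hi]; rewrite (surj_mi_out (i := i)) ?mul0r //; apply: leq_ltn_trans (hB i) hi.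
under eq_bigr => m _ do
  rewrite sub_add_e_set surj_mi_add_e_set // pow_mi_add_e_set !mulr_suml.
rewrite exchange_big /=; apply: eq_bigr => r /andP [/eqP hr _].
rewrite prod_supp_box hr /solution mulr_sumr; apply: eq_bigr => m _; ring.
Qed.

Lemma solution_rec (nu : mi) : (forall i : 'I_n, (nu i <= B)%N) -> ~~ is_zero_mi n nu ->
  solution nu =
  \sum_(r : box | [forall i, (r i <= nu i)%N] &&
                  (~~ is_zero_mi n (mi_of r) && qle q (supp_card n (mi_of r))))
     (binom_mi n nu (mi_of r))%:R * prod_supp n beta (mi_of r)
       * solution (sub_mi nu (mi_of r)).
Proof.
move=> hB hnu; rewrite solution_expand_Dq //.
under eq_bigr => u _ do rewrite solution_shift //.
rewrite [RHS](partition_big (@box_supp n B) (fun u => (u != set0) && qle q #|u|)) /=; last first.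
  by move=> r /andP [_]; rewrite is_zero_box /supp_card box_suppE.
apply: eq_bigr => u /andP [hu hq]; apply: eq_bigl => r.
rewrite is_zero_box /supp_card box_suppE.
by case: (eqVneq (box_supp r) u) => [->|]; rewrite ?hu ?hq ?andbT ?andbF.
Qed.

End Solution.

Section RecursionRhs.
Variables (q : option nat) (n : nat) (nu : mi).

Lemma rec_rhs_ext (R : nzRingType) (c : R) (beta : nat -> R) (F G : mi -> R) :
  (forall m, supp_in n m -> (forall i : 'I_n, (m i <= nu i)%N) -> ~~ is_zero_mi n m ->
     F (sub_mi nu m) = G (sub_mi nu m)) ->
  rec_rhs q c beta F n nu = rec_rhs q c beta G n nu.
Proof.
move=> FG; apply: eq_bigr => r /andP [/forallP hr /andP [hz _]].
by rewrite FG //; [exact: ext_mi_supp | by move=> i; rewrite ext_miE].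
Qed.

Lemma rec_rhs_mono (R : numDomainType) (c : R) (beta : nat -> R) (F G : mi -> R) :
  0 <= c -> (forall j, 0 <= beta j) ->
  (forall m, supp_in n m -> (forall i : 'I_n, (m i <= nu i)%N) -> ~~ is_zero_mi n m ->
     F (sub_mi nu m) <= G (sub_mi nu m)) ->
  rec_rhs q c beta F n nu <= rec_rhs q c beta G n nu.
Proof.
move=> c_ge0 beta_ge0 FG; apply: ler_sum => r /andP [/forallP hr /andP [hz _]].
apply: ler_wpM2r; first exact: prodr_ge0.
apply: ler_wpM2l; first by rewrite mulr_ge0 ?exprn_ge0.
by apply: FG => //; [exact: ext_mi_supp | by move=> i; rewrite ext_miE].
Qed.

End RecursionRhs.

Lemma mi_ind n B (P : mi -> Prop) :
  (forall v, supp_in n v -> (forall i : 'I_n, (v i <= B)%N) ->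
     (forall m, supp_in n m -> (forall i : 'I_n, (m i <= v i)%N) -> ~~ is_zero_mi n m ->
        P (sub_mi v m)) -> P v) ->
  forall v, supp_in n v -> (forall i : 'I_n, (v i <= B)%N) -> P v.
Proof.
move=> step v; elim: {v}(abs_mi n v).+1 {-2}v (ltnSn (abs_mi n v)) => // k IH v hk hv hvB.
apply: step => // m hm hmv hz; apply: IH.
- by move: hk; rewrite (abs_mi_sub hmv) ltnS; have := abs_mi_gt0 hz; lia.
- exact: sub_mi_supp.
- by move=> i; apply: leq_trans (leq_subr _ _) (hvB i).
Qed.

Section Bound.
Variables (R : numFieldType) (q : option nat) (beta : nat -> R) (n B : nat) (c0 c : R).
Notation box := {ffun 'I_n -> 'I_B.+1}.

Definition scaled_solution (nu : mi) : R :=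
  c0 * c ^+ abs_mi n nu * solution q beta n B nu.

Lemma fact_stirling2_mi (nu m : mi) :
  (fact_mi n m)%:R * \prod_(i < n) stirling2 (nu i) (m i) = surj_mi R n nu m.
Proof.
by rewrite /fact_mi natr_prod -big_split; apply: eq_bigr => i _; rewrite /= fact_stirling2.
Qed.

(* The box sum of the statement is A(nu): the terms with m not below nu vanish. *)
Lemma bound_rhs_scaled (nu : mi) : (forall i : 'I_n, (nu i <= B)%N) ->
  bound_rhs q c0 c beta n nu = scaled_solution nu.
Proof.
move=> hB; rewrite /bound_rhs (sum_le_box _ _ hB) /scaled_solution /solution.
congr (_ * _); rewrite big_mkcond /=; apply: eq_bigr => m _; rewrite andbT.
case: ifPn => [_|/forallPn [i]]; first by rewrite -fact_stirling2_mi; ring.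
by rewrite -ltnNge -(mi_ofE m) => /surj_mi_out ->; rewrite !mul0r.
Qed.

(* At nu = 0 only m = 0 contributes, since surj 0 k = [k == 0]. *)
Lemma solution_zero (nu : mi) : is_zero_mi n nu -> solution q beta n B nu = 1.
Proof.
move=> /forallP hz.
have surjE (m : box) : surj_mi R n nu (mi_of m) = (m == [ffun=> ord0])%:R.
  rewrite /surj_mi (eq_bigr (fun i => ((m i == ord0) : nat)%:R)) => [|i _]; last first.
    by rewrite (eqP (hz i)) surj_0k mi_ofE.
  rewrite -natr_prod; congr (_%:R).
  case: eqP => [->|/eqP hm]; first by rewrite big1 // => i _; rewrite ffunE eqxx.
  have [i hi] : exists i, m i != ord0.
    apply/existsP; apply: contraR hm => /existsPn h.
    by apply/eqP/ffunP => i; rewrite ffunE; apply/eqP/negPn.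
  by rewrite (bigD1 i) //= (negbTE hi).
rewrite /solution (bigD1 [ffun=> ord0]) //= big1 => [|m /negbTE hm]; last by rewrite surjE hm !mul0r.
rewrite surjE eqxx mul1r Dq_zero; last by apply/forallP => i; rewrite mi_ofE ffunE.
by rewrite /pow_mi big1 ?mulr1 ?addr0 // => i _; rewrite mi_ofE ffunE.
Qed.

Lemma scaled_solution_zero : scaled_solution (fun _ => 0%N) = c0.
Proof.
have hz : is_zero_mi n (fun _ => 0%N) by apply/forallP.
by rewrite /scaled_solution solution_zero // abs_mi_zero // expr0 !mulr1.
Qed.

Lemma scaled_solution_rec (nu : mi) : (forall i : 'I_n, (nu i <= B)%N) -> ~~ is_zero_mi n nu ->
  scaled_solution nu = rec_rhs q c beta scaled_solution n nu.
Proof.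
move=> hB hnu; rewrite /rec_rhs (sum_le_box _ _ hB) {1}/scaled_solution solution_rec //.
rewrite mulr_sumr; apply: eq_bigr => r /andP [/forallP hr _].
rewrite /scaled_solution (@abs_mi_sub n nu (mi_of r)) => [|i]; last by rewrite mi_ofE.
by rewrite exprD; ring.
Qed.

End Bound.

Unset Implicit Arguments.

Theorem lemmaA1 (R : realFieldType) (c0 c : R) (q : option nat)
  (beta : nat -> R) (Ups : mi -> R) :
  0 < c0 -> 0 < c -> (if q is Some q' then (0 < q')%N else true) ->
  (forall j, 0 <= beta j) ->
  (forall nu, (exists n, supp_in n nu) -> 0 <= Ups nu) ->
  ((Ups (fun _ => 0%N) <= c0 ->
    (forall n nu, supp_in n nu -> ~~ is_zero_mi n nu ->
       Ups nu <= rec_rhs q c beta Ups n nu) ->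
    forall n nu, supp_in n nu -> Ups nu <= bound_rhs q c0 c beta n nu)
  /\
   (Ups (fun _ => 0%N) = c0 ->
    (forall n nu, supp_in n nu -> ~~ is_zero_mi n nu ->
       Ups nu = rec_rhs q c beta Ups n nu) ->
    forall n nu, supp_in n nu -> Ups nu = bound_rhs q c0 c beta n nu)).
Proof.
move=> _ c_gt0 _ beta_ge0 _.
split=> [Ups0 Ups_rec | Ups0 Ups_rec] n nu hnu;
  have [B hB] : exists B, forall i : 'I_n, (nu i <= B)%N by exists (abs_mi n nu); exact: abs_mi_ge.
- rewrite (bound_rhs_scaled q beta c0 c hB); move: nu hnu hB.
  apply: (@mi_ind n B (fun v => Ups v <= scaled_solution q beta n B c0 c v)) => v hv hvB IH.
  have [hz|hz] := boolP (is_zero_mi n v).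
    by rewrite (zero_mi_eq hv hz) scaled_solution_zero.
  rewrite scaled_solution_rec //; apply: le_trans (Ups_rec n v hv hz) _.
  exact: rec_rhs_mono (ltW c_gt0) beta_ge0 IH.
- rewrite (bound_rhs_scaled q beta c0 c hB); move: nu hnu hB.
  apply: (@mi_ind n B (fun v => Ups v = scaled_solution q beta n B c0 c v)) => v hv hvB IH.
  have [hz|hz] := boolP (is_zero_mi n v).
    by rewrite (zero_mi_eq hv hz) scaled_solution_zero.
  by rewrite scaled_solution_rec // (Ups_rec n v hv hz); apply: rec_rhs_ext.
Qed.
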